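(* Let the setting, algorithm and $M_1$ be as in the context, and suppose $c_k\le1$ for all $k$. Then for all $k\ge0$, $$\|\mathbf g^k\|\le\|\mathbf g^k-\mathbf W^\infty\mathbf g^k\|+L_1\|\mathbf x^k-\mathbf W^\infty\mathbf x^k\|+\sqrt n\|\nabla F(\bar x^k)\|.$$ Moreover, if for some $k_0\ge0$ it holds that $M_1I_d\preceq H_i^{k_0}+MI_d\preceq M_2I_d$ for all $i$, then $$\|\mathbf x^{k_0+1}-\mathbf x^{k_0}\|\le\Big(2+\frac{2\alpha L_1}{M_1}\Big)\|\mathbf x^{k_0}-\mathbf W^\infty\mathbf x^{k_0}\|+\frac{2\alpha}{M_1}\|\mathbf g^{k_0}-\mathbf W^\infty\mathbf g^{k_0}\|+\frac{2\alpha\sqrt n}{M_1}\|\nabla F(\bar x^{k_0})\|.$$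
   Context: Setting. $n,d\ge1$; $W\in\mathbb{R}^{n\times n}$ is entrywise nonnegative, symmetric, $W1_n=1_n$, with $w_{ij}=0$ iff $j$ is neither $i$ nor a neighbor of $i$ in an undirected connected graph; $\sigma=\|W-\frac1n1_n1_n^T\|<1$. Each $f_i:\mathbb{R}^d\to\mathbb{R}$ is $C^2$ with $L_1$-Lipschitz gradient and $L_2$-Lipschitz Hessian; $F=\frac1n\sum_if_i$ with $\nabla^2F\succeq\mu I_d$, $\mu>0$, minimizer $x^*$. $\mathcal Q:\mathbb{R}^{d\times d}\to\mathbb{R}^{d\times d}$ deterministic with $\|\mathcal Q(A)-A\|_F\le(1-\delta)\|A\|_F$, $\delta\in(0,1]$, applied blockwise. Notation: $\mathbf x=[x_1;\dots;x_n]$, $\bar x=\frac1n\sum x_i$; $\mathbf H=[H_1;\dots;H_n]$; $\mathbf W=W\otimes I_d$, $\mathbf W^\infty=\frac1n1_n1_n^T\otimes I_d$; $\nabla f(\mathbf x)=[\nabla f_i(x_i)]_i$, $\nabla^2 f(\mathbf x)=[\nabla^2f_i(x_i)]_i$. Algorithm: arbitrary $\mathbf x^0$, $g_i^0=\nabla f_i(x_i^0)$, $H_i^0=\nabla^2 f_i(x_i^0)$, arbitrary $\mathbf E^0,\tilde{\mathbf H}^0$, $\alpha,\gamma>0$, integer $m\ge1$, $M\ge0$, $c_k\in[0,1]$; for $k\ge0$: $\mathbf x^{k+1}=\mathbf W^m(\mathbf x^k-\alpha\mathbf d^k)$; $\mathbf g^{k+1}=\mathbf W^m(\mathbf g^k+\nabla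 f(\mathbf x^{k+1})-\nabla f(\mathbf x^k))$; $\mathbf E^{k+1}=\mathbf E^k+\mathbf H^k-\tilde{\mathbf H}^k-\mathcal Q(\mathbf E^k+\mathbf H^k-\tilde{\mathbf H}^k)$; $\tilde{\mathbf H}^{k+1}=\tilde{\mathbf H}^k+\mathcal Q(\mathbf H^k-\tilde{\mathbf H}^k)$; $\hat{\mathbf H}^k=\tilde{\mathbf H}^k+\mathcal Q(\mathbf E^k+\mathbf H^k-\tilde{\mathbf H}^k)$; $\mathbf H^{k+1}=\mathbf H^k-\gamma(I_{nd}-\mathbf W)\hat{\mathbf H}^k+\nabla^2f(\mathbf x^{k+1})-\nabla^2f(\mathbf x^k)$; $\mathbf d^k$ satisfies $(\mathrm{diag}\{H_i^k\}+MI_{nd})\mathbf d^k=\mathbf g^k+\mathbf r^k$, $\|\mathbf r^k\|\le c_k\|\mathbf g^k\|$. Constants: $u_1^0=\|\mathbf x^0-\mathbf W^\infty\mathbf x^0\|^2+\frac{(1-\sigma^2)^2}{50L_1^2}\|\mathbf g^0-\mathbf W^\infty\mathbf g^0\|^2+2\sigma^{m-1}\frac n{L_1}(F(\bar x^0)-F(x^* ))$; $u_2^0=\frac{\delta(1-\sigma)}{8(1-\delta)}\|\mathbf E^0\|_F+\frac{1-\sigma}4\|\mathbf H^0-\tilde{\mathbf H}^0\|_F+\|\mathbf H^0-\mathbf W^\infty\mathbf H^0\|_F$; $C=\frac{3.75L_2\sqrt{\sigma^{-(m-1)}u_1^0}}{\sqrt{1-\mu\alpha/(2M_2)}-(1-\gamma(1-\sigma)/2)}$;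 $\tilde u_2^0=\max\{u_2^0-C,C\}$; $M_1=\mu+M-L_2\sqrt{u_1^0/n}-\tilde u_2^0$; $M_2=L_1+M+L_2\sqrt{u_1^0/n}+\tilde u_2^0$ (assumed $M_2\ge M_1>0$). *)

From HB Require Import structures.
From mathcomp Require Import all_boot all_order all_algebra.
From mathcomp Require Import all_classical all_reals all_analysis.
Set Implicit Arguments.
Unset Strict Implicit.
Unset Printing Implicit Defensive.
Import Order.TTheory GRing.Theory Num.Theory.
Import numFieldNormedType.Exports.
Local Open Scope classical_set_scope.
Local Open Scope ring_scope.

Section Defs.
Variable R : realType.

Definition mnorm (p q : nat) (A : 'M[R]_(p, q)) : R :=
  Num.sqrt (\sum_(a < p) \sum_(b < q) A a b ^+ 2).

Definition opnorm (p q : nat) (A : 'M[R]_(p, q)) : R :=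
  sup [set mnorm (A *m v) | v in [set v : 'cV[R]_q | mnorm v <= 1]].

Definition loewner_le (d : nat) (A B : 'M[R]_d) : Prop :=
  forall v : 'cV[R]_d, ((v^T *m A *m v) 0 0) <= ((v^T *m B *m v) 0 0).

(* Stacked objects [z_1; ...; z_n] are families 'I_n -> 'M_(p,q). *)
Definition snorm (n p q : nat) (z : 'I_n -> 'M[R]_(p, q)) : R :=
  Num.sqrt (\sum_(i < n) \sum_(a < p) \sum_(b < q) z i a b ^+ 2).

(* Action of A (x) I on a stacked object: block i is sum_j A_ij z_j. *)
Definition kron_apply (n p q : nat) (A : 'M[R]_n) (z : 'I_n -> 'M[R]_(p, q))
  : 'I_n -> 'M[R]_(p, q) := fun i => \sum_(j < n) A i j *: z j.

(* Average (bar z) and W^infty z = 1_n (x) bar z. *)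
Definition avg (n p q : nat) (z : 'I_n -> 'M[R]_(p, q)) : 'M[R]_(p, q) :=
  (n%:R)^-1 *: \sum_(j < n) z j.

Definition Winf (n p q : nat) (z : 'I_n -> 'M[R]_(p, q)) : 'I_n -> 'M[R]_(p, q) :=
  fun _ => avg z.

Definition consdev (n p q : nat) (z : 'I_n -> 'M[R]_(p, q)) : 'I_n -> 'M[R]_(p, q) :=
  fun i => z i - avg z.

Definition sdiff (n p q : nat) (z z' : 'I_n -> 'M[R]_(p, q)) : 'I_n -> 'M[R]_(p, q) :=
  fun i => z i - z' i.

Definition Jn (n : nat) : 'M[R]_n := (n%:R)^-1 *: const_mx 1.

Definition sigmaW (n : nat) (W : 'M[R]_n) : R := opnorm (W - Jn n).

End Defs.

(** Since W^m is doubly stochastic, the tracking recursion preserves averages,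
    so the average of g^k is the average of the local gradients at the x_i^k;
    by L1-Lipschitz continuity it differs from grad F at the average of x^k by
    at most L1/sqrt n times the consensus error of x^k, which gives the first
    bound once g^k is split into its consensus error and its average.
    For the second, W^m fixes consensus vectors, so
    x^{k+1} - x^k = W^m (x^k - W^oo x^k) - (x^k - W^oo x^k) - alpha W^m d^k;
    W^m is a contraction for the stacked norm, and M1 I <= H_i^k + M I gives
    M1 |d^k| <= |g^k + r^k| <= 2 |g^k|. *)

From HB Require Import structures.
From mathcomp Require Import all_boot all_order all_algebra.
From mathcomp Require Import all_classical all_reals all_analysis.
From mathcomp Require Import ring lra.
Import Order.TTheory GRing.Theory Num.Theory.
Import numFieldNormedType.Exports.
Local Open Scope classical_set_scope.
Local Open Scope ring_scope.

Set Implicit Arguments.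
Unset Strict Implicit.

Section FiniteL2.
Variables (R : realType) (I : finType).
Implicit Types (u v : I -> R).

Definition l2norm u : R := Num.sqrt (\sum_i u i ^+ 2).

Lemma l2norm_ge0 u : 0 <= l2norm u.
Proof. exact: sqrtr_ge0. Qed.

Lemma sqr_l2norm u : l2norm u ^+ 2 = \sum_i u i ^+ 2.
Proof. by rewrite sqr_sqrtr // sumr_ge0 // => i _; rewrite sqr_ge0. Qed.

Lemma lagrange_identity u v :
  \sum_i \sum_j (u i * v j - u j * v i) ^+ 2 =
  2 * ((\sum_i u i ^+ 2) * (\sum_j v j ^+ 2) - (\sum_i u i * v i) ^+ 2).
Proof.
have expand i j : (u i * v j - u j * v i) ^+ 2 =
  u i ^+ 2 * v j ^+ 2 + u j ^+ 2 * v i ^+ 2 - 2 * (u i * v i * (u j * v j)).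
  by ring.
under eq_bigr => i _ do under eq_bigr => j _ do rewrite expand.
under eq_bigr do rewrite sumrB big_split.
rewrite sumrB big_split [X in _ + X - _]exchange_big /=.
rewrite expr2 !big_distrlr /=.
under [X in _ - X = _]eq_bigr do rewrite -mulr_sumr.
by rewrite -mulr_sumr; ring.
Qed.

Lemma cauchy_schwarz u v : \sum_i u i * v i <= l2norm u * l2norm v.
Proof.
have lag : (\sum_i u i * v i) ^+ 2 <= (\sum_i u i ^+ 2) * (\sum_i v i ^+ 2).
  rewrite -subr_ge0 -(pmulr_rge0 _ (ltr0Sn _ 1)) -lagrange_identity.
  by do 2!(apply: sumr_ge0 => ? _); apply: sqr_ge0.
rewrite -sqrtrM ?sumr_ge0 // => [|i _]; last exact: sqr_ge0.
by rewrite (le_trans (ler_norm _)) // -sqrtr_sqr ler_wsqrtr.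
Qed.

Lemma l2norm_le u v : (forall i, 0 <= u i <= v i) -> l2norm u <= l2norm v.
Proof.
move=> uv; rewrite ler_wsqrtr // ler_sum // => i _.
by have /andP[u0 le_uv] := uv i; rewrite lerXn2r // nnegrE (le_trans u0).
Qed.

Lemma l2normD u v : l2norm (fun i => u i + v i) <= l2norm u + l2norm v.
Proof.
rewrite -[X in _ <= X]ger0_norm ?addr_ge0 ?l2norm_ge0 // -sqrtr_sqr ler_wsqrtr //.
have := cauchy_schwarz u v; rewrite sqrrD !sqr_l2norm => cs.
under eq_bigr do rewrite sqrrD.
by rewrite !big_split /=; lra.
Qed.

Lemma l2normZ c u : l2norm (fun i => c * u i) = `|c| * l2norm u.
Proof.
rewrite /l2norm; under eq_bigr do rewrite exprMn.
by rewrite -mulr_sumr sqrtrM ?sqr_ge0 // sqrtr_sqr.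
Qed.

Lemma sum_le_l2norm u : \sum_i u i <= Num.sqrt #|I|%:R * l2norm u.
Proof.
have := cauchy_schwarz (fun _ => 1) u.
by rewrite /l2norm expr1n sumr_const; under eq_bigr do rewrite mul1r.
Qed.

Lemma sqr_convex_comb (P m : I -> R) :
  (forall i, 0 <= P i) -> \sum_i P i = 1 ->
  (\sum_i P i * m i) ^+ 2 <= \sum_i P i * m i ^+ 2.
Proof.
move=> P_ge0 P_sum1.
have var_eq c : \sum_i P i * (m i - c) ^+ 2 =
    \sum_i P i * m i ^+ 2 - 2 * c * (\sum_i P i * m i) + c ^+ 2 * \sum_i P i.
  rewrite !mulr_sumr -sumrB -big_split /=; apply: eq_bigr => i _; ring.
have := var_eq (\sum_i P i * m i); rewrite P_sum1.
have : 0 <= \sum_i P i * (m i - \sum_i P i * m i) ^+ 2.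
  by apply: sumr_ge0 => i _; rewrite mulr_ge0 ?sqr_ge0.
lra.
Qed.

End FiniteL2.

Section StackedNorms.
Variable R : realType.

Lemma mnormE p q (A : 'M[R]_(p, q)) :
  mnorm A = l2norm (fun t : 'I_p * 'I_q => A t.1 t.2).
Proof. by rewrite /mnorm /l2norm pair_big. Qed.

Lemma mnorm_col p (v : 'cV[R]_p) : mnorm v = l2norm (fun a => v a 0).
Proof. by rewrite /mnorm /l2norm; under eq_bigr do rewrite big_ord1. Qed.

Lemma mnorm_ge0 p q (A : 'M[R]_(p, q)) : 0 <= mnorm A.
Proof. exact: sqrtr_ge0. Qed.

Lemma mnormD p q (A B : 'M[R]_(p, q)) : mnorm (A + B) <= mnorm A + mnorm B.
Proof.
by rewrite !mnormE; under eq_fun do rewrite mxE; apply: l2normD.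
Qed.

Lemma mnormZ p q (c : R) (A : 'M[R]_(p, q)) : mnorm (c *: A) = `|c| * mnorm A.
Proof. by rewrite !mnormE -l2normZ; under eq_fun do rewrite mxE. Qed.

Lemma mnormN p q (A : 'M[R]_(p, q)) : mnorm (- A) = mnorm A.
Proof. by rewrite -scaleN1r mnormZ normrN normr1 mul1r. Qed.

Lemma mnorm0 p q : mnorm (0 : 'M[R]_(p, q)) = 0.
Proof. by rewrite -(scale0r 0) mnormZ normr0 mul0r. Qed.

Lemma mnorm_sum p q (I : Type) (r : seq I) (P : pred I) (F : I -> 'M[R]_(p, q)) :
  mnorm (\sum_(i <- r | P i) F i) <= \sum_(i <- r | P i) mnorm (F i).
Proof.
elim/big_rec2: _ => [|i A a _ IH]; first by rewrite mnorm0.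
by rewrite (le_trans (mnormD _ _)) // lerD2l.
Qed.

Lemma snormE n p q (z : 'I_n -> 'M[R]_(p, q)) :
  snorm z = l2norm (fun i => mnorm (z i)).
Proof.
rewrite /snorm /l2norm; congr Num.sqrt; apply: eq_bigr => i _.
by rewrite sqr_sqrtr // sumr_ge0 // => a _; rewrite sumr_ge0 // => b _; rewrite sqr_ge0.
Qed.

Lemma snorm_ge0 n p q (z : 'I_n -> 'M[R]_(p, q)) : 0 <= snorm z.
Proof. exact: sqrtr_ge0. Qed.

Lemma snorm_le n p q p' q' (z : 'I_n -> 'M[R]_(p, q)) (w : 'I_n -> 'M[R]_(p', q'))
    (c : R) :
  0 <= c -> (forall i, mnorm (z i) <= c * mnorm (w i)) -> snorm z <= c * snorm w.
Proof.
move=> c_ge0 zw; rewrite !snormE -(ger0_norm c_ge0) -l2normZ.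
by apply: l2norm_le => i; rewrite mnorm_ge0 zw.
Qed.

Lemma snormD n p q (z w : 'I_n -> 'M[R]_(p, q)) :
  snorm (fun i => z i + w i) <= snorm z + snorm w.
Proof.
rewrite !snormE (le_trans _ (l2normD _ _)) // l2norm_le // => i.
by rewrite mnorm_ge0 mnormD.
Qed.

Lemma snormZ n p q (c : R) (z : 'I_n -> 'M[R]_(p, q)) :
  snorm (fun i => c *: z i) = `|c| * snorm z.
Proof.
by rewrite !snormE -[`|c|]normr_id -l2normZ; under eq_fun do rewrite mnormZ.
Qed.

Lemma snormN n p q (z : 'I_n -> 'M[R]_(p, q)) : snorm (fun i => - z i) = snorm z.
Proof. by rewrite !snormE; under eq_fun do rewrite mnormN. Qed.

Lemma snorm_cst n p q (A : 'M[R]_(p, q)) :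
  snorm (fun _ : 'I_n => A) = Num.sqrt n%:R * mnorm A.
Proof.
rewrite snormE /l2norm sumr_const card_ord -[_ *+ n]mulr_natl sqrtrM ?ler0n //.
by rewrite sqrtr_sqr ger0_norm ?mnorm_ge0.
Qed.

End StackedNorms.

Section Averages.
Variables (R : realType) (n p q : nat).
Implicit Types z w : 'I_n -> 'M[R]_(p, q).

Lemma avgD z w : avg (fun j => z j + w j) = avg z + avg w.
Proof. by rewrite /avg big_split scalerDr. Qed.

Lemma avgB z w : avg (fun j => z j - w j) = avg z - avg w.
Proof. by rewrite /avg sumrB scalerBr. Qed.

Lemma avg_kron (P : 'M[R]_n) z :
  (forall j, \sum_i P i j = 1) -> avg (kron_apply P z) = avg z.
Proof.
move=> P_col; rewrite /avg /kron_apply exchange_big /=; congr (_ *: _).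
by apply: eq_bigr => j _; rewrite -scaler_suml P_col scale1r.
Qed.

Lemma avg_tracking (P : 'M[R]_n) (g G : nat -> 'I_n -> 'M[R]_(p, q)) :
  (forall j, \sum_i P i j = 1) -> (forall i, g 0%N i = G 0%N i) ->
  (forall k i, g k.+1 i = kron_apply P (fun j => g k j + G k.+1 j - G k j) i) ->
  forall k, avg (g k) = avg (G k).
Proof.
move=> P_col g0 g_rec; elim=> [|k IH]; first by congr avg; apply: funext.
have -> : g k.+1 = kron_apply P (fun j => g k j + G k.+1 j - G k j).
  by apply: funext => i; rewrite g_rec.
by rewrite avg_kron // avgB avgD IH addrAC subrr add0r.
Qed.

Lemma snorm_le_consdev_avg z :
  snorm z <= snorm (consdev z) + Num.sqrt n%:R * mnorm (avg z).
Proof.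
have split_z : z = fun i => consdev z i + Winf z i.
  by apply: funext => i; rewrite subrK.
by rewrite {1}split_z -snorm_cst; apply: snormD.
Qed.

Lemma sqrtn_mnorm_avg_le z : Num.sqrt n%:R * mnorm (avg z) <= snorm z.
Proof.
have [n0|n_gt0] := posnP n.
  by rewrite (_ : n%:R = 0) ?n0 // sqrtr0 mul0r snorm_ge0.
have sum_le : \sum_i mnorm (z i) <= Num.sqrt n%:R * snorm z.
  by rewrite snormE -[n in Num.sqrt n%:R]card_ord sum_le_l2norm.
have inv_n_ge0 : 0 <= n%:R^-1 :> R by rewrite invr_ge0 ler0n.
rewrite /avg mnormZ ger0_norm //.
rewrite (le_trans (ler_wpM2l (sqrtr_ge0 _)
  (ler_wpM2l inv_n_ge0 (le_trans (mnorm_sum _ _ _) sum_le)))) //.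
set s := Num.sqrt _; have -> : s * (n%:R^-1 * (s * snorm z)) = s ^+ 2 / n%:R * snorm z.
  by rewrite /s; ring.
by rewrite sqr_sqrtr ?ler0n // mulfV ?mul1r // pnatr_eq0 -lt0n.
Qed.

End Averages.

Lemma avg_lipschitz_le (R : realType) n p q p' q'
    (f : 'I_n -> 'M[R]_(p, q) -> 'M[R]_(p', q')) (L : R) (z : 'I_n -> 'M[R]_(p, q)) :
  0 <= L -> (forall i a, mnorm (f i a - f i (avg z)) <= L * mnorm (a - avg z)) ->
  Num.sqrt n%:R * mnorm (avg (fun i => f i (z i))) <=
  Num.sqrt n%:R * mnorm (avg (fun i => f i (avg z))) + L * snorm (consdev z).
Proof.
move=> L_ge0 f_lip.
have -> : avg (fun i => f i (z i)) =
    avg (fun i => f i (avg z)) + avg (fun i => f i (z i) - f i (avg z)).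
  by rewrite avgB addrC subrK.
rewrite (le_trans (ler_wpM2l (sqrtr_ge0 _) (mnormD _ _))) // mulrDr lerD2l.
by rewrite (le_trans (sqrtn_mnorm_avg_le _)) // snorm_le.
Qed.

Section DoublyStochastic.
Variables (R : realType) (n : nat).
Implicit Types P : 'M[R]_n.

Definition doubly_stochastic P :=
  [/\ forall i j, 0 <= P i j, forall i, \sum_j P i j = 1 & forall j, \sum_i P i j = 1].

Lemma doubly_stochastic1 : doubly_stochastic 1.
Proof.
split=> [i j|i|j].
- by rewrite mxE ler0n.
- rewrite (bigD1 i) //= big1 => [|j /negbTE ji]; first by rewrite mxE eqxx addr0.
  by rewrite mxE eq_sym ji.
- rewrite (bigD1 j) //= big1 => [|i /negbTE ij]; first by rewrite mxE eqxx addr0.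
  by rewrite mxE ij.
Qed.

Lemma doubly_stochasticM P P' :
  doubly_stochastic P -> doubly_stochastic P' -> doubly_stochastic (P * P').
Proof.
move=> [P_ge0 P_row P_col] [P'_ge0 P'_row P'_col].
have mulE i j : (P * P') i j = \sum_k P i k * P' k j by rewrite -mulmxE mxE.
split=> [i j|i|j].
- by rewrite mulE sumr_ge0 // => k _; rewrite mulr_ge0.
- under eq_bigr do rewrite mulE.
  by rewrite exchange_big /=; under eq_bigr do rewrite -mulr_sumr P'_row mulr1.
- under eq_bigr do rewrite mulE.
  by rewrite exchange_big /=; under eq_bigr do rewrite -mulr_suml P_col mul1r.
Qed.

Lemma doubly_stochasticX P k : doubly_stochastic P -> doubly_stochastic (P ^+ k).
Proof.
move=> P_ds; elim: k => [|k IH]; first exact: doubly_stochastic1.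
by rewrite exprS; apply: doubly_stochasticM.
Qed.

Lemma sym_doubly_stochastic P :
  (forall i j, 0 <= P i j) -> P^T = P -> (forall i, \sum_j P i j = 1) ->
  doubly_stochastic P.
Proof.
move=> P_ge0 P_sym P_row; split=> // j; rewrite -(P_row j).
by apply: eq_bigr => i _; rewrite -{1}P_sym mxE.
Qed.

Lemma snorm_kron_le p q P (z : 'I_n -> 'M[R]_(p, q)) :
  doubly_stochastic P -> snorm (kron_apply P z) <= snorm z.
Proof.
move=> [P_ge0 P_row P_col]; rewrite !snormE.
apply: (@le_trans _ _ (l2norm (fun i => \sum_j P i j * mnorm (z j)))).
  apply: l2norm_le => i; rewrite mnorm_ge0 (le_trans (mnorm_sum _ _ _)) //.
  by apply: ler_sum => j _; rewrite mnormZ ger0_norm.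
have row_jensen i :
    (\sum_j P i j * mnorm (z j)) ^+ 2 <= \sum_j P i j * mnorm (z j) ^+ 2.
  exact: sqr_convex_comb.
rewrite ler_wsqrtr // (le_trans (ler_sum _ (fun i _ => row_jensen i))) //.
by rewrite exchange_big /=; apply: ler_sum => j _; rewrite -mulr_suml P_col mul1r.
Qed.

Lemma kron_apply_sub_consdev p q P (x y : 'I_n -> 'M[R]_(p, q)) (a : R) :
  (forall i, \sum_j P i j = 1) ->
  sdiff (kron_apply P (fun j => x j - a *: y j)) x =
  fun i => kron_apply P (consdev x) i - consdev x i - a *: kron_apply P y i.
Proof.
move=> P_row; apply: funext => i; rewrite /sdiff /kron_apply /consdev.
have -> : \sum_j P i j *: (x j - a *: y j) =
    \sum_j P i j *: x j - a *: \sum_j P i j *: y j.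
  by rewrite scaler_sumr -sumrB; apply: eq_bigr => j _; rewrite scalerBr !scalerA mulrC.
have -> : \sum_j P i j *: (x j - avg x) = \sum_j P i j *: x j - avg x.
  rewrite -{2}(scale1r (avg x)) -(P_row i) scaler_suml -sumrB.
  by apply: eq_bigr => j _; rewrite scalerBr.
by rewrite opprB addrA subrK addrAC.
Qed.

Lemma snorm_consensus_step_le p q P (x y : 'I_n -> 'M[R]_(p, q)) (a : R) :
  doubly_stochastic P -> 0 <= a ->
  snorm (sdiff (kron_apply P (fun j => x j - a *: y j)) x) <=
  2 * snorm (consdev x) + a * snorm y.
Proof.
move=> P_ds a_ge0; have [_ P_row _] := P_ds.
rewrite kron_apply_sub_consdev // (le_trans (snormD _ _)) //.
rewrite snormN snormZ ger0_norm // (le_trans (lerD (snormD _ _) (lexx _))) // snormN.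
have := snorm_kron_le (consdev x) P_ds; have := snorm_kron_le y P_ds.
move=> /(ler_wpM2l a_ge0); lra.
Qed.

End DoublyStochastic.

Lemma loewner_mnorm_lb (R : realType) d (c : R) (A : 'M[R]_d) (v : 'cV[R]_d) :
  0 < c -> loewner_le c%:M A -> c * mnorm v <= mnorm (A *m v).
Proof.
move=> c_gt0 cA.
have quad_cI : (v^T *m c%:M *m v) 0 0 = c * mnorm v ^+ 2.
  rewrite mul_mx_scalar -scalemxAl mxE mnorm_col sqr_l2norm mxE.
  by congr (_ * _); apply: eq_bigr => a _; rewrite mxE expr2.
have quad_le : (v^T *m A *m v) 0 0 <= mnorm v * mnorm (A *m v).
  rewrite -mulmxA mxE !mnorm_col; under eq_bigr do rewrite mxE.
  exact: cauchy_schwarz.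
have [v0|v_neq0] := eqVneq (mnorm v) 0; first by rewrite v0 mulr0 mnorm_ge0.
have := le_trans (cA v) quad_le; rewrite quad_cI expr2 mulrCA ler_pM2l //.
by rewrite lt_neqAle eq_sym v_neq0 mnorm_ge0.
Qed.

Lemma snorm_loewner_lb (R : realType) n d (c : R) (A : 'I_n -> 'M[R]_d)
    (v : 'I_n -> 'cV[R]_d) :
  0 < c -> (forall i, loewner_le c%:M (A i)) ->
  c * snorm v <= snorm (fun i => A i *m v i).
Proof.
move=> c_gt0 cA; rewrite !snormE -(gtr0_norm c_gt0) -l2normZ.
apply: l2norm_le => i; apply/andP; split; last exact: loewner_mnorm_lb.
by rewrite mulr_ge0 ?mnorm_ge0 ?ltW.
Qed.

Lemma lipschitz_ge0 (R : realType) d p q (f : 'cV[R]_d -> 'M[R]_(p, q)) (L : R) :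
  (0 < d)%N -> (forall a b, mnorm (f a - f b) <= L * mnorm (a - b)) -> 0 <= L.
Proof.
move=> d_gt0 f_lip.
have one_gt0 : 0 < mnorm (const_mx 1 : 'cV[R]_d).
  rewrite mnorm_col /l2norm sqrtr_gt0; under eq_bigr do rewrite mxE expr1n.
  by rewrite sumr_const card_ord ltr0n.
by have := le_trans (mnorm_ge0 _) (f_lip (const_mx 1) 0); rewrite subr0 pmulr_lge0.
Qed.

Unset Implicit Arguments.

Theorem lemma2
  (R : realType) (n d : nat) (hn : (1 <= n)%N) (hd : (1 <= d)%N)
  (* graph and mixing matrix *)
  (adj : rel 'I_n) (W : 'M[R]_n)
  (adj_sym : forall i j, adj i j = adj j i)
  (adj_irr : forall i, ~~ adj i i)
  (adj_conn : forall i j, connect adj i j)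
  (W_nonneg : forall i j, 0 <= W i j)
  (W_sym : W^T = W)
  (W_stoch : forall i, \sum_(j < n) W i j = 1)
  (W_supp : forall i j, W i j = 0 <-> (j != i) && ~~ adj i j)
  (W_sigma : sigmaW W < 1)
  (* local functions, gradients, Hessians *)
  (f : 'I_n -> 'cV[R]_d -> R) (grad : 'I_n -> 'cV[R]_d -> 'cV[R]_d)
  (hess : 'I_n -> 'cV[R]_d -> 'M[R]_d) (L1 L2 mu : R)
  (f_grad : forall i (x v : 'cV[R]_d), is_derive x v (f i) (((grad i x)^T *m v) 0 0))
  (f_hess : forall i (x v : 'cV[R]_d), is_derive x v (grad i) (hess i x *m v))
  (grad_lip : forall i (x y : 'cV[R]_d), mnorm (grad i x - grad i y) <= L1 * mnorm (x - y))
  (hess_lip : forall i (x y : 'cV[R]_d), opnorm (hess i x - hess i y) <= L2 * mnorm (x - y))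
  (mu_pos : 0 < mu)
  (F_strong : forall x : 'cV[R]_d,
     loewner_le (mu%:M) ((n%:R)^-1 *: \sum_(i < n) hess i x))
  (xstar : 'cV[R]_d)
  (xstar_min : forall y : 'cV[R]_d,
     (n%:R)^-1 * \sum_(i < n) f i xstar <= (n%:R)^-1 * \sum_(i < n) f i y)
  (* compression operator *)
  (Q : 'M[R]_d -> 'M[R]_d) (delta : R)
  (delta_pos : 0 < delta) (delta_le1 : delta <= 1)
  (Q_contr : forall A : 'M[R]_d, mnorm (Q A - A) <= (1 - delta) * mnorm A)
  (* algorithm parameters *)
  (alpha gamma M : R) (m : nat) (c : nat -> R)
  (alpha_pos : 0 < alpha) (gamma_pos : 0 < gamma) (m_pos : (1 <= m)%N)
  (M_nonneg : 0 <= M) (c_nonneg : forall k, 0 <= c k) (c_le1 : forall k, c k <= 1)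
  (* algorithm iterates *)
  (x g dir r : nat -> 'I_n -> 'cV[R]_d)
  (E Ht H : nat -> 'I_n -> 'M[R]_d)
  (g0 : forall i, g 0%N i = grad i (x 0%N i))
  (H0 : forall i, H 0%N i = hess i (x 0%N i))
  (x_rec : forall k i, x k.+1 i =
     kron_apply (W ^+ m) (fun j => x k j - alpha *: dir k j) i)
  (g_rec : forall k i, g k.+1 i =
     kron_apply (W ^+ m) (fun j => g k j + grad j (x k.+1 j) - grad j (x k j)) i)
  (E_rec : forall k i, E k.+1 i =
     E k i + H k i - Ht k i - Q (E k i + H k i - Ht k i))
  (Ht_rec : forall k i, Ht k.+1 i = Ht k i + Q (H k i - Ht k i))
  (H_rec : forall k i, H k.+1 i =
     let Hhat := fun j => Ht k j + Q (E k j + H k j - Ht k j) in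
     H k i - gamma *: (Hhat i - kron_apply W Hhat i)
       + hess i (x k.+1 i) - hess i (x k i))
  (dir_eq : forall k i, (H k i + M%:M) *m dir k i = g k i + r k i)
  (r_bound : forall k, snorm (r k) <= c k * snorm (g k))
  (* constants *)
  (C M1 M2 : R)
  (hC : let sigma := sigmaW W in
        let F := fun y => (n%:R)^-1 * \sum_(i < n) f i y in
        let u1 := snorm (consdev (x 0%N)) ^+ 2
                  + (1 - sigma ^+ 2) ^+ 2 / (50%:R * L1 ^+ 2) * snorm (consdev (g 0%N)) ^+ 2
                  + 2%:R * sigma ^+ (m.-1) * n%:R / L1 * (F (avg (x 0%N)) - F xstar) in
        C = 15%:R / 4%:R * L2 * Num.sqrt ((sigma ^+ (m.-1))^-1 * u1)
            / (Num.sqrt (1 - mu * alpha / (2%:R * M2)) - (1 - gamma * (1 - sigma) / 2%:R)))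
  (hM1 : let sigma := sigmaW W in
        let F := fun y => (n%:R)^-1 * \sum_(i < n) f i y in
        let u1 := snorm (consdev (x 0%N)) ^+ 2
                  + (1 - sigma ^+ 2) ^+ 2 / (50%:R * L1 ^+ 2) * snorm (consdev (g 0%N)) ^+ 2
                  + 2%:R * sigma ^+ (m.-1) * n%:R / L1 * (F (avg (x 0%N)) - F xstar) in
        let u2 := delta * (1 - sigma) / (8%:R * (1 - delta)) * snorm (E 0%N)
                  + (1 - sigma) / 4%:R * snorm (sdiff (H 0%N) (Ht 0%N))
                  + snorm (consdev (H 0%N)) in
        let tu2 := Num.max (u2 - C) C in
        M1 = mu + M - L2 * Num.sqrt (u1 / n%:R) - tu2)
  (hM2 : let sigma := sigmaW W in
        let F := fun y => (n%:R)^-1 * \sum_(i < n) f i y in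
        let u1 := snorm (consdev (x 0%N)) ^+ 2
                  + (1 - sigma ^+ 2) ^+ 2 / (50%:R * L1 ^+ 2) * snorm (consdev (g 0%N)) ^+ 2
                  + 2%:R * sigma ^+ (m.-1) * n%:R / L1 * (F (avg (x 0%N)) - F xstar) in
        let u2 := delta * (1 - sigma) / (8%:R * (1 - delta)) * snorm (E 0%N)
                  + (1 - sigma) / 4%:R * snorm (sdiff (H 0%N) (Ht 0%N))
                  + snorm (consdev (H 0%N)) in
        let tu2 := Num.max (u2 - C) C in
        M2 = L1 + M + L2 * Num.sqrt (u1 / n%:R) + tu2)
  (hM1pos : 0 < M1) (hM12 : M1 <= M2) :
  let gradF := fun y : 'cV[R]_d => (n%:R)^-1 *: \sum_(i < n) grad i y in
  (forall k : nat,
     snorm (g k) <= snorm (consdev (g k)) + L1 * snorm (consdev (x k))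
                    + Num.sqrt (n%:R) * mnorm (gradF (avg (x k)))) /\
  (forall k0 : nat,
     (forall i, loewner_le (M1%:M) (H k0 i + M%:M) /\ loewner_le (H k0 i + M%:M) (M2%:M)) ->
     snorm (sdiff (x k0.+1) (x k0)) <=
       (2%:R + 2%:R * alpha * L1 / M1) * snorm (consdev (x k0))
       + 2%:R * alpha / M1 * snorm (consdev (g k0))
       + 2%:R * alpha * Num.sqrt (n%:R) / M1 * mnorm (gradF (avg (x k0)))).
Proof.
move=> gradF.
have W_ds : doubly_stochastic (W ^+ m).
  by apply/doubly_stochasticX/sym_doubly_stochastic.
have [_ _ Wm_col] := W_ds.
have L1_ge0 : 0 <= L1 := lipschitz_ge0 hd (grad_lip (Ordinal hn)).
have g_avg := avg_tracking (G := fun k i => grad i (x k i)) Wm_col g0 g_rec.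
have g_le k : snorm (g k) <= snorm (consdev (g k)) + L1 * snorm (consdev (x k))
                              + Num.sqrt (n%:R) * mnorm (gradF (avg (x k))).
  rewrite (le_trans (snorm_le_consdev_avg (g k))) // g_avg -addrA lerD2l addrC.
  by apply: avg_lipschitz_le => // i a; apply: grad_lip.
split=> // k0 hL.
have dir_le : M1 * snorm (dir k0) <= 2 * snorm (g k0).
  rewrite (le_trans (snorm_loewner_lb (dir k0) hM1pos (fun i => (hL i).1))) //.
  under eq_fun do rewrite dir_eq.
  rewrite (le_trans (snormD _ _)) //.
  have := r_bound k0; have := c_le1 k0; have := snorm_ge0 (g k0); nra.
have -> : x k0.+1 = kron_apply (W ^+ m) (fun j => x k0 j - alpha *: dir k0 j).
  by apply: funext => i; rewrite x_rec.
rewrite (le_trans (snorm_consensus_step_le _ _ W_ds (ltW alpha_pos))) //.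
have step_ge0 : 0 <= 2 * alpha / M1 by rewrite !mulr_ge0 ?invr_ge0 ?ltW.
have alpha_dir : alpha * snorm (dir k0) <= 2 * alpha / M1 * snorm (g k0).
  rewrite -(ler_pM2l hM1pos).
  have -> : M1 * (2 * alpha / M1 * snorm (g k0)) = alpha * (2 * snorm (g k0)).
    by field; rewrite gt_eqF.
  rewrite mulrCA; exact: (ler_wpM2l (ltW alpha_pos) dir_le).
have := ler_wpM2l step_ge0 (g_le k0).
lra.
Qed.
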